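(* Let $\mathcal{P}$ be a locally geometric poset with $A(\mathcal{P})\ne\emptyset$ and let $a\in A(\mathcal{P})$. (a) Suppose $a$ is not a separator of $\mathcal{P}$. If $\mathcal{P}''$ is inductive with $\exp(\mathcal{P}'')=\{d_1,\dots,d_{\ell-1}\}$ and $\mathcal{P}'$ is inductive with $\exp(\mathcal{P}')=\{d_1,\dots,d_{\ell-1},d_\ell\}$, then $\mathcal{P}$ is inductive with $\exp(\mathcal{P})=\{d_1,\dots,d_{\ell-1},d_\ell+1\}$. (b) Suppose $a$ is a separator of $\mathcal{P}$. If $\mathcal{P}''$ and $\mathcal{P}'$ are inductive with $\exp(\mathcal{P}'')=\exp(\mathcal{P}')=\{d_1,\dots,d_{\ell-1}\}$, then $\mathcal{P}$ is inductive with $\exp(\mathcal{P})=\{1,d_1,\dots,d_{\ell-1}\}$.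
   Context: All posets are finite, have a unique minimal element $\hat0$ and are ranked; $\operatorname{rk}(\mathcal{P})=\max\operatorname{rk}$; $\chi_{\mathcal{P}}(t)=\sum_x\mu(\hat0,x)t^{\operatorname{rk}(\mathcal{P})-\operatorname{rk}(x)}$. A poset is factorable if all roots of $\chi$ are positive integers, and $\exp$ denotes the multiset of roots (inductive posets are factorable). $A(\mathcal{P})$ is the set of atoms; $\bigvee T$ the set of minimal upper bounds of $T$. A lattice is geometric if $y$ covers $x$ iff there is an atom $a\not\le x$ with $y=x\vee a$; $\mathcal{P}$ is locally geometric if each $\mathcal{P}_{\le x}$ is a geometric lattice. For an atom $a$: $\mathcal{P}'$ is the subposet consisting of $\hat0$ and all elements of $\bigvee T$ for nonempty $T\subseteq A(\mathcal{P})\setminus\{a\}$; $\mathcal{P}''=\mathcal{P}_{\ge a}$ (minimal element $a$, rank $\operatorname{rk}-1$). The atom $a$ is a separator if $\operatorname{rk}(\mathcal{P})-\operatorname{rk}(\mathcal{P}')=1$ (this difference is always $0$ or $1$). Inductive posets: smallest class of locally geometric posets containing $\{\hat0\}$ and containing $\mathcal{P}$ whenever some atom $a$ has $\mathcal{P}',\mathcal{P}''$ inductive and $\chi_{\mathcal{P}''}\mid\chi_{\mathcal{P}'}$. *)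

(* A finite poset is represented as a finite subset [P] of an
   ambient finite type [T] carrying a relation [le]; all posets occurring in the
   theorem (P, P', P'', intervals P_{<= x}) are subsets of P with the induced
   order, so they live in the same ambient type. *)
From mathcomp Require Import all_boot all_order all_algebra.
Set Implicit Arguments. Unset Strict Implicit. Unset Printing Implicit Defensive.
Import GRing.Theory.
Local Open Scope ring_scope.

Section Posets.
Variables (T : finType) (le : rel T).

Definition poset_on (Q : {set T}) : Prop :=
  [/\ {in Q, forall x, le x x},
      {in Q &, forall x y, le x y -> le y x -> x = y} &
      {in Q & &, forall x y z, le x y -> le y z -> le x z}].

Definition minimalb (Q : {set T}) (z : T) : bool :=
  (z \in Q) && [forall x in Q, le x z ==> (x == z)].

Definition has_unique_min (Q : {set T}) : Prop :=
  exists z, minimalb Q z /\ forall w, minimalb Q w -> w = z.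

Definition leastb (Q : {set T}) (z : T) : bool :=
  (z \in Q) && [forall x in Q, le z x].

Definition coversb (Q : {set T}) (x y : T) : bool :=
  [&& x \in Q, y \in Q, le x y, x != y &
      [forall z in Q, ~~ [&& le x z, le z y, z != x & z != y]]].

Definition chainb (C : {set T}) : bool :=
  [forall u in C, forall v in C, le u v || le v u].

(* rk x = (max size of a chain of Q below x) - 1; for a ranked poset with
   \hat0 this is the length of any maximal chain from \hat0 to x *)
Definition rkx (Q : {set T}) (x : T) : nat :=
  (\max_(C : {set T} | [&& C \subset Q, chainb C & [forall u in C, le u x]])
      #|C|).-1.

Definition rk (Q : {set T}) : nat := \max_(x in Q) rkx Q x.

Definition ranked (Q : {set T}) : Prop :=
  forall x y, coversb Q x y -> rkx Q y = (rkx Q x).+1.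

Definition std_poset (Q : {set T}) : Prop :=
  [/\ poset_on Q, has_unique_min Q & ranked Q].

Definition atomb (Q : {set T}) (a : T) : bool :=
  [exists z, leastb Q z && coversb Q z a].

Definition atoms (Q : {set T}) : {set T} := [set a | atomb Q a].

Definition is_join (Q : {set T}) (u v w : T) : bool :=
  [&& w \in Q, le u w, le v w &
      [forall w' in Q, (le u w' && le v w') ==> le w w']].

Definition is_meet (Q : {set T}) (u v w : T) : bool :=
  [&& w \in Q, le w u, le w v &
      [forall w' in Q, (le w' u && le w' v) ==> le w' w]].

Definition is_lattice (Q : {set T}) : Prop :=
  forall u v, u \in Q -> v \in Q ->
    (exists w, is_join Q u v w) /\ (exists w, is_meet Q u v w).

Definition geometric (Q : {set T}) : Prop :=
  is_lattice Q /\
  forall x y, x \in Q -> y \in Q ->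
    (coversb Q x y <-> exists a, [/\ a \in atoms Q, ~~ le a x & is_join Q x a y]).

Definition Pleq (Q : {set T}) (x : T) : {set T} := [set y in Q | le y x].
Definition Pgeq (Q : {set T}) (x : T) : {set T} := [set y in Q | le x y].

Definition locally_geometric (Q : {set T}) : Prop :=
  std_poset Q /\ forall x, x \in Q -> geometric (Pleq Q x).

Fixpoint mu_fuel (Q : {set T}) (n : nat) (x y : T) : int :=
  match n with
  | 0 => 0
  | n'.+1 =>
      if x == y then 1
      else if le x y then
        - \sum_(z in Q | [&& le x z, le z y & z != y]) mu_fuel Q n' x z
      else 0
  end.

Definition mu (Q : {set T}) (x y : T) : int := mu_fuel Q #|T| x y.

Definition chi (Q : {set T}) : {poly int} :=
  match [pick z | leastb Q z] with
  | Some z => \sum_(x in Q) (mu Q z x)%:P * 'X^(rk Q - rkx Q x)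
  | None => 0
  end.

(* exp(Q) = s : chi_Q has exactly the positive integer roots s (with
   multiplicity), i.e. chi_Q = prod_{d in s} (t - d). *)
Definition exps (Q : {set T}) (s : seq nat) : Prop :=
  all (fun d => 0 < d)%N s /\ chi Q = \prod_(d <- s) ('X - (d%:R)%:P).

Definition is_ub (Q S : {set T}) (w : T) : bool :=
  (w \in Q) && [forall s in S, le s w].
Definition is_mub (Q S : {set T}) (w : T) : bool :=
  is_ub Q S w && [forall w' in Q, (is_ub Q S w' && le w' w) ==> (w' == w)].

Definition Pprime (Q : {set T}) (a : T) : {set T} :=
  [set z in Q | leastb Q z ||
     [exists S : {set T}, [&& S \subset atoms Q :\ a, S != set0 & is_mub Q S z]]].

Definition Pdprime (Q : {set T}) (a : T) : {set T} := Pgeq Q a.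

Definition separator (Q : {set T}) (a : T) : Prop :=
  (rk Q - rk (Pprime Q a))%N = 1%N.

Inductive inductive : {set T} -> Prop :=
| inductive_base (Q : {set T}) (z : T) :
    locally_geometric Q -> Q = [set z] -> inductive Q
| inductive_step (Q : {set T}) (a : T) :
    locally_geometric Q -> a \in atoms Q ->
    inductive (Pprime Q a) -> inductive (Pdprime Q a) ->
    (exists r : {poly int}, chi (Pprime Q a) = r * chi (Pdprime Q a)) ->
    inductive Q.

End Posets.

(* Splitting the crosscut expansion of mu_P(0, y) over the sets S of atoms of which y is a
   minimal upper bound according to whether a is in S gives
     mu_P(0, y) = mu_P'(0, y) - mu_P''(a, y):
   each half satisfies the defining recursion of the Moebius function of P', resp. P'',
   because the alternating sum of (-1)^|S| over the subsets S of a set D is [D = empty].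
   Ranks in P' are those of P, ranks in P'' drop by one, and rk P - rk P' is 0 or 1 (each x
   in P is an element of P' or the join of such an element with a), whence
     chi_P(t) = t^(rk P - rk P') chi_P'(t) - t^(rk P - 1 - rk P'') chi_P''(t).
   Plugging in the factorizations of chi_P' and chi_P'' yields exp(P) in both cases, and
   chi_P'' divides chi_P', so P is inductive. *)

From mathcomp Require Import all_boot all_order all_algebra.
From mathcomp Require Import zify ring.
Set Implicit Arguments. Unset Strict Implicit. Unset Printing Implicit Defensive.
Import GRing.Theory.

Section Sign.
Variable T : finType.

Lemma sum_sign_subsets (D : {set T}) :
  (\sum_(S : {set T} | S \subset D) (-1) ^+ #|S| = (D == set0)%:R :> int)%R.
Proof.
have [->|/set0Pn [d dD]] := eqVneq D set0.
  rewrite (eq_bigl (pred1 set0)) ?big_pred1_eq ?cards0 ?expr0 // => S.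
  by rewrite /= subset0.
(* Toggling [d] is a sign-reversing involution on the subsets of [D]. *)
pose h (S : {set T}) := if d \in S then S :\ d else d |: S.
have hK : involutive h.
  move=> S; rewrite /h; case dS: (d \in S); first by rewrite setD11 setD1K.
  by rewrite setU11 setU1K // dS.
have sub_h S : (h S \subset D) = (S \subset D).
  rewrite /h; case: ifP => dS; last by rewrite subUset sub1set dD.
  apply/idP/idP => [sSD|]; last exact/subset_trans/subsetDl.
  by rewrite -(setD1K dS) subUset sub1set dD sSD.
have sign_h S : ((-1) ^+ #|h S| = - (-1) ^+ #|S| :> int)%R.
  rewrite /h; case: ifP => dS; last by rewrite cardsU1 dS add1n exprS mulN1r.
  by rewrite [in RHS](cardsD1 d S) dS add1n exprS mulN1r opprK.
set s := (\sum_(S : {set T} | S \subset D) (-1) ^+ #|S|)%R; suff : (s = - s)%R by lia.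
rewrite {1}/s (reindex_inj (can_inj hK)) /= -sumrN.
by under eq_bigl do rewrite sub_h; apply: eq_bigr => S _; rewrite sign_h.
Qed.

Lemma sum_sign_subsets_in (D E : {set T}) :
  (\sum_(S : {set T} | S \subset D) (if S \subset E then (-1) ^+ #|S| else 0) =
    (D :&: E == set0)%:R :> int)%R.
Proof. by rewrite -big_mkcondr -sum_sign_subsets; apply: eq_bigl => S; rewrite subsetI. Qed.

End Sign.

Section Poset.
Variables (T : finType) (le : rel T).

Lemma coversE (Q : {set T}) x y : coversb le Q x y ->
  [/\ x \in Q, y \in Q, le x y, x != y &
      forall z, z \in Q -> le x z -> le z y -> z = x \/ z = y].
Proof.
case/and5P => xQ yQ xy nxy /forallP between; split => // z zQ xz zy.
have /negP := between z; rewrite zQ xz zy /=.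
by case: (eqVneq z x) => [|zx]; [left | case: (eqVneq z y) => [|zy'] //; right].
Qed.

Lemma coversI (Q : {set T}) x y : x \in Q -> y \in Q -> le x y -> x != y ->
  (forall z, z \in Q -> le x z -> le z y -> z = x \/ z = y) -> coversb le Q x y.
Proof.
move=> xQ yQ xy nxy between; rewrite /coversb xQ yQ xy nxy /=.
apply/forallP => z; apply/implyP => zQ; apply/negP => /and4P[xz zy zx zy'].
by case: (between z zQ xz zy) => E; [move: zx | move: zy']; rewrite E eqxx.
Qed.

Lemma chain1 u : chainb le [set u] = le u u.
Proof.
apply/forallP/idP => [/(_ u)|uu x]; first by rewrite set11 => /forallP /(_ u); rewrite set11 orbb.
apply/implyP; rewrite in_set1 => /eqP ->; apply/forallP => y; apply/implyP.
by rewrite in_set1 => /eqP ->; rewrite uu.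
Qed.

Lemma leq_chain_rkx (Q C : {set T}) x : C \subset Q -> chainb le C ->
  (forall u, u \in C -> le u x) -> (#|C|.-1 <= rkx le Q x)%N.
Proof.
move=> sCQ chC Cx; rewrite /rkx -!subn1; apply: leq_sub2r.
by apply: (leq_bigmax_cond C); rewrite sCQ chC; apply/forallP => u; apply/implyP/Cx.
Qed.

Lemma rkx_leq_chains (Q : {set T}) x n :
  (forall C : {set T}, C \subset Q -> chainb le C -> (forall u, u \in C -> le u x) ->
     #|C| <= n.+1)%N ->
  (rkx le Q x <= n)%N.
Proof.
move=> chains_le; suff : (\max_(C : {set T} |
    [&& C \subset Q, chainb le C & [forall u in C, le u x]]) #|C| <= n.+1)%N.
  by rewrite /rkx; lia.
apply/bigmax_leqP => C /and3P[sCQ chC /forallP Cx]; apply: chains_le => // u uC.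
exact: implyP (Cx u) uC.
Qed.

Lemma rkx_subset (Q1 Q2 : {set T}) x : Q1 \subset Q2 -> (rkx le Q1 x <= rkx le Q2 x)%N.
Proof.
move=> sQ12; apply: rkx_leq_chains => C sCQ chC Cx.
by have := leq_chain_rkx (subset_trans sCQ sQ12) chC Cx; lia.
Qed.

Lemma leq_rkx_rk (Q : {set T}) x : x \in Q -> (rkx le Q x <= rk le Q)%N.
Proof. by move=> xQ; apply: leq_bigmax_cond. Qed.

Lemma rk_leq (Q : {set T}) n : (forall x, x \in Q -> rkx le Q x <= n)%N -> (rk le Q <= n)%N.
Proof. by move/bigmax_leqP. Qed.

Lemma mubE (Q S : {set T}) w : is_mub le Q S w ->
  [/\ w \in Q, forall s, s \in S -> le s w &
      forall w', w' \in Q -> (forall s, s \in S -> le s w') -> le w' w -> w' = w].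
Proof.
case/andP=> /andP[wQ /forallP Sw] /forallP wmin; split => // [s sS|w' w'Q Sw' w'w].
  exact: implyP (Sw s) sS.
apply/eqP; move: (wmin w'); rewrite w'Q /= w'w andbT; move/implyP; apply.
by rewrite /is_ub w'Q; apply/forallP => s; apply/implyP/Sw'.
Qed.

Lemma mubI (Q S : {set T}) w : w \in Q -> (forall s, s \in S -> le s w) ->
  (forall w', w' \in Q -> (forall s, s \in S -> le s w') -> le w' w -> w' = w) ->
  is_mub le Q S w.
Proof.
move=> wQ Sw wmin; rewrite /is_mub /is_ub wQ; apply/andP; split.
  by apply/forallP => s; apply/implyP/Sw.
apply/forallP => w'; apply/implyP => w'Q; apply/implyP => /andP[/andP[_ /forallP Sw'] w'w].
by apply/eqP/wmin => // s sS; apply: implyP (Sw' s) sS.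
Qed.

Lemma poset_on_subset (Q R : {set T}) : poset_on le Q -> R \subset Q -> poset_on le R.
Proof.
move=> [refl anti trans] /subsetP sRQ; split.
- by move=> x /sRQ; apply: refl.
- by move=> x y /sRQ xQ /sRQ yQ; apply: anti.
- by move=> x y z /sRQ xQ /sRQ yQ /sRQ zQ; apply: trans.
Qed.

Section OnPoset.
Variable Q : {set T}.
Hypothesis Qposet : poset_on le Q.

Lemma le_refl_in x : x \in Q -> le x x.
Proof. by case: Qposet => refl _ _; apply: refl. Qed.

Lemma le_anti_in x y : x \in Q -> y \in Q -> le x y -> le y x -> x = y.
Proof. by case: Qposet => _ anti _; apply: anti. Qed.

Lemma le_trans_in x y z : x \in Q -> y \in Q -> z \in Q -> le x y -> le y z -> le x z.
Proof. by case: Qposet => _ _ trans; apply: trans. Qed.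

Lemma exists_minimal (X : {set T}) : X \subset Q -> X != set0 ->
  exists2 m, m \in X & forall y, y \in X -> le y m -> y = m.
Proof.
move=> /subsetP sXQ /set0Pn [x0 x0X].
(* An element of [X] with fewest elements of [X] below it is minimal. *)
pose below m := #|[set y in X | le y m]|.
have [m mX m_min] := arg_minnP below x0X; have {}mX : m \in X := mX.
exists m => // y yX ym; apply/eqP/negPn/negP => nym.
have : (below y < below m)%N.
  apply/proper_card/properP; split.
    apply/subsetP => w; rewrite !inE => /andP[wX wy]; rewrite wX.
    exact: le_trans_in (sXQ _ wX) (sXQ _ yX) (sXQ _ mX) wy ym.
  exists m; first by rewrite !inE mX le_refl_in ?sXQ.
  rewrite !inE mX /=; apply/negP => my; move/eqP: nym; apply.
  exact: le_anti_in (sXQ _ yX) (sXQ _ mX) ym my.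
by rewrite ltnNge m_min.
Qed.

Lemma least_exists : has_unique_min le Q -> exists z, leastb le Q z.
Proof.
case=> z [/andP[zQ _] z_uniq]; exists z; rewrite /leastb zQ.
apply/forallP => x; apply/implyP => xQ.
have sXQ : [set y in Q | le y x] \subset Q by apply/subsetP => y; rewrite inE => /andP[].
have [|m] := exists_minimal sXQ; first by apply/set0Pn; exists x; rewrite inE xQ le_refl_in.
rewrite inE => /andP[mQ mx] m_min; suff -> : z = m by [].
symmetry; apply: z_uniq; rewrite /minimalb mQ; apply/forallP => w; apply/implyP => wQ.
apply/implyP => wm; apply/eqP/m_min => //.
by rewrite inE wQ (le_trans_in wQ mQ xQ wm mx).
Qed.

Lemma least_uniq z1 z2 : leastb le Q z1 -> leastb le Q z2 -> z1 = z2.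
Proof.
move=> /andP[z1Q /forallP z1_le] /andP[z2Q /forallP z2_le].
by apply: le_anti_in => //; [move: (z1_le z2) | move: (z2_le z1)]; rewrite ?z1Q ?z2Q.
Qed.

Lemma chainU1 (C : {set T}) u : chainb le C -> u \in Q -> C \subset Q ->
  (forall w, w \in C -> le u w \/ le w u) -> chainb le (u |: C).
Proof.
move=> /forallP chC uQ sCQ u_cmp; apply/forallP => x; apply/implyP; rewrite in_setU1 => xuC.
apply/forallP => y; apply/implyP; rewrite in_setU1 => yuC.
case/orP: xuC => [/eqP ->|xC]; case/orP: yuC => [/eqP ->|yC].
- by rewrite le_refl_in.
- by case: (u_cmp y yC) => ->; rewrite ?orbT.
- by case: (u_cmp x xC) => ->; rewrite ?orbT.
- by move: (chC x); rewrite xC => /forallP /(_ y); rewrite yC.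
Qed.

Lemma rkx_least z : leastb le Q z -> rkx le Q z = 0%N.
Proof.
move=> /andP[zQ /forallP z_le]; apply/eqP; rewrite -leqn0.
apply: rkx_leq_chains => C /subsetP sCQ _ Cz; rewrite -(cards1 z).
apply/subset_leq_card/subsetP => u uC; rewrite in_set1; apply/eqP.
have uQ := sCQ _ uC; apply: le_anti_in => //; first exact: Cz.
by move: (z_le u); rewrite uQ.
Qed.

Lemma rkx_gt0 z x : leastb le Q z -> x \in Q -> x != z -> (0 < rkx le Q x)%N.
Proof.
move=> /andP[zQ /forallP z_le] xQ nxz; have zx : le z x by move: (z_le x); rewrite xQ.
have : (#|[set z; x]|.-1 <= rkx le Q x)%N.
  apply: leq_chain_rkx; first by rewrite subUset !sub1set zQ xQ.
    apply: chainU1; rewrite ?chain1 ?le_refl_in ?sub1set //.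
    by move=> w; rewrite in_set1 => /eqP ->; left.
  by move=> u; rewrite !inE => /orP[] /eqP ->; rewrite ?le_refl_in.
by rewrite cards2 eq_sym nxz.
Qed.

Lemma mub_exists x (S : {set T}) : x \in Q -> (forall s, s \in S -> le s x) ->
  exists2 y, le y x & is_mub le Q S y.
Proof.
move=> xQ Sx; pose X := [set w in Q | le w x && [forall s in S, le s w]].
have sXQ : X \subset Q by apply/subsetP => y; rewrite inE => /andP[].
have [|m] := exists_minimal sXQ.
  apply/set0Pn; exists x; rewrite inE xQ le_refl_in //=.
  by apply/forallP => s; apply/implyP/Sx.
rewrite inE => /andP[mQ /andP[mx /forallP Sm]] m_min; exists m => //.
apply: mubI => // [s sS|w' w'Q Sw' w'm]; first exact: implyP (Sm s) sS.
apply: m_min => //; rewrite inE w'Q (le_trans_in w'Q mQ xQ w'm mx).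
by apply/forallP => s; apply/implyP/Sw'.
Qed.

Section Moebius.
Variable x0 : T.
Hypothesis x0Q : x0 \in Q.

Let itv_card y := #|[set w in Q | le x0 w && le w y]|.

Lemma itv_card_lt z y : z \in Q -> y \in Q -> le x0 z -> le z y -> z != y ->
  (itv_card z < itv_card y)%N.
Proof.
move=> zQ yQ x0z zy nzy; apply/proper_card/properP; split.
  apply/subsetP => w; rewrite !inE => /and3P[wQ x0w wz]; rewrite wQ x0w.
  exact: le_trans_in wQ zQ yQ wz zy.
exists y; first by rewrite !inE yQ le_refl_in // (le_trans_in x0Q zQ yQ x0z zy).
rewrite !inE yQ /=; apply/negP => /andP[_ yz]; move/eqP: nzy; apply.
exact: le_anti_in.
Qed.

Lemma mu_fuelS n y : mu_fuel le Q n.+1 x0 y =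
  if x0 == y then 1%R else if le x0 y then
    (- \sum_(z in Q | [&& le x0 z, le z y & z != y]) mu_fuel le Q n x0 z)%R else 0%R.
Proof. by []. Qed.

Lemma mu_fuel_stable n y : y \in Q -> (itv_card y <= n)%N ->
  forall m, (n <= m)%N -> mu_fuel le Q m x0 y = mu_fuel le Q n x0 y.
Proof.
elim: n y => [|n IHn] y yQ card_le [|m] // le_nm; rewrite !mu_fuelS.
  have nx0y : ~~ le x0 y.
    apply/negP => x0y; move: card_le; rewrite leqn0 => /eqP/cards0_eq/setP/(_ y).
    by rewrite !inE yQ x0y le_refl_in.
  case: eqP => [x0y|_]; last by rewrite (negbTE nx0y).
  by case/negP: nx0y; rewrite x0y le_refl_in.
case: eqP => // _; case: ifP => // _; congr (- _)%R.
apply: eq_bigr => z /andP[zQ /and3P[x0z zy nzy]]; apply: IHn => //.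
by have := itv_card_lt zQ yQ x0z zy nzy; lia.
Qed.

Lemma mu_rec y : y \in Q -> mu le Q x0 y =
  if x0 == y then 1%R else if le x0 y then
    (- \sum_(z in Q | [&& le x0 z, le z y & z != y]) mu le Q x0 z)%R else 0%R.
Proof.
move=> yQ; have cardT : #|T| = (#|T|.-1).+1 by rewrite prednK //; apply/card_gt0P; exists y.
rewrite {1}/mu {1}cardT mu_fuelS; case: eqP => // _; case: ifP => // _; congr (- _)%R.
apply: eq_bigr => z /andP[zQ /and3P[x0z zy nzy]].
rewrite /mu (@mu_fuel_stable (#|T|.-1) z zQ) //; last by rewrite cardT.
have := itv_card_lt zQ yQ x0z zy nzy; have : (itv_card y <= #|T|)%N by apply: max_card.
lia.
Qed.

Lemma mu_unique (f : T -> int) :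
  (forall y, y \in Q -> le x0 y ->
     (\sum_(z in Q | le x0 z && le z y) f z = (y == x0)%:R)%R) ->
  forall y, y \in Q -> le x0 y -> f y = mu le Q x0 y.
Proof.
move=> f_sum y; have [n] := ubnP (itv_card y); elim: n y => // n IHn y card_lt yQ x0y.
have := f_sum y yQ x0y; rewrite (bigD1 y) /=; last by rewrite yQ x0y le_refl_in.
rewrite mu_rec //; have [<-|ny] := eqVneq y x0.
  rewrite big_pred0 ?addr0 // => z.
  apply/negP => /andP[/andP[zQ /andP[yz zy]] /eqP nzy]; apply: nzy.
  exact: le_anti_in.
rewrite x0y => /eqP; rewrite addr_eq0 => /eqP ->.
congr (- _)%R; apply: eq_big => [z|z /andP[/and3P[zQ x0z zy] nzy]]; first by rewrite -!andbA.
by apply: IHn => //; have := itv_card_lt zQ yQ x0z zy nzy; lia.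
Qed.

End Moebius.

Lemma chiE z : leastb le Q z ->
  chi le Q = (\sum_(x in Q) (mu le Q z x)%:P * 'X^(rk le Q - rkx le Q x))%R.
Proof.
move=> zQ; rewrite /chi; case: pickP => [z' z'Q|none]; last by move: (none z); rewrite zQ.
by rewrite (least_uniq z'Q zQ).
Qed.

Lemma size_chi z : leastb le Q z -> size (chi le Q) = (rk le Q).+1.
Proof.
move=> z_least; have zQ : z \in Q by case/andP: z_least.
rewrite (chiE z_least) (bigD1 z) //= (mu_rec zQ zQ) eqxx (rkx_least z_least) subn0.
rewrite polyC1 mul1r size_polyDl size_polyXn // ltnS.
apply: leq_trans (size_sum _ _ _) _; apply/bigmax_leqP => x /andP[xQ nxz].
rewrite mul_polyC; apply: leq_trans (size_scale_leq _ _) _; rewrite size_polyXn.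
by have := rkx_gt0 z_least xQ nxz; have := leq_rkx_rk xQ; lia.
Qed.

Lemma rk_exps z ds : leastb le Q z -> exps le Q ds -> rk le Q = size ds.
Proof.
by move=> z_least [_ chiQ]; have := size_chi z_least; rewrite chiQ size_prod_XsubC => -[].
Qed.

End OnPoset.
End Poset.

Section LocallyGeometric.
Variables (T : finType) (le : rel T) (P : {set T}) (z0 : T).
Hypotheses (LG : locally_geometric le P) (z0_least : leastb le P z0).

Local Notation L x := (Pleq le P x).
Local Notation A := (atoms le P).
Local Notation rkP x := (rkx le P x).

Let P_poset : poset_on le P. Proof. by case: LG => [[]]. Qed.
Let reflP := le_refl_in P_poset.
Let antiP := le_anti_in P_poset.
Let transP := le_trans_in P_poset.

Lemma ranked_P : ranked le P. Proof. by case: LG => [[]]. Qed.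

Lemma geometric_Pleq x : x \in P -> geometric le (L x). Proof. by case: LG => _; apply. Qed.

Lemma z0_in : z0 \in P. Proof. by case/andP: z0_least. Qed.

Lemma z0_le x : x \in P -> le z0 x.
Proof. by case/andP: z0_least => _ /forallP z0_le xP; move: (z0_le x); rewrite xP. Qed.

Lemma leastb_subset (Q : {set T}) : Q \subset P -> z0 \in Q -> leastb le Q z0.
Proof.
move=> /subsetP sQP z0Q; rewrite /leastb z0Q; apply/forallP => x.
by apply/implyP => /sQP; apply: z0_le.
Qed.

Lemma atomE c : (c \in A) = coversb le P z0 c.
Proof.
rewrite inE; apply/existsP/idP => [[z /andP[z_least cov]]|cov]; last first.
  by exists z0; rewrite z0_least.
by rewrite -(least_uniq P_poset z_least z0_least).
Qed.

Lemma atom_in c : c \in A -> c \in P.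
Proof. by rewrite atomE => /coversE[]. Qed.

Lemma atom_neq_z0 c : c \in A -> c != z0.
Proof. by rewrite atomE => /coversE[_ _ _]; rewrite eq_sym. Qed.

Lemma le_atom c y : c \in A -> y \in P -> le y c -> y = z0 \/ y = c.
Proof. by rewrite atomE => /coversE[_ _ _ _ between] yP; apply: between; rewrite ?z0_le. Qed.

Lemma in_Pleq x y : (y \in L x) = (y \in P) && le y x.
Proof. by rewrite inE. Qed.

Lemma coversb_Pleq x u v : x \in P -> le v x -> coversb le (L x) u v = coversb le P u v.
Proof.
move=> xP vx; apply/idP/idP => /coversE[uQ vQ uv nuv between].
  move: uQ vQ; rewrite !in_Pleq => /andP[uP ux] /andP[vP _].
  apply: coversI => // z zP uz zv; apply: between => //.
  by rewrite in_Pleq zP (transP zP vP xP zv vx).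
have ux := transP uQ vQ xP uv vx.
apply: coversI; rewrite ?in_Pleq ?uQ ?vQ ?ux //.
by move=> z; rewrite in_Pleq => /andP[zP _]; apply: between.
Qed.

Lemma Pleq_subset x : L x \subset P.
Proof. by apply/subsetP => y; rewrite in_Pleq => /andP[]. Qed.

Lemma atoms_Pleq x c : x \in P -> (c \in atoms le (L x)) = (c \in A) && le c x.
Proof.
move=> xP; have z0L : leastb le (L x) z0.
  by apply: leastb_subset (Pleq_subset x) _; rewrite in_Pleq z0_in z0_le.
rewrite inE; apply/existsP/idP => [[z /andP[z_least cov]]|/andP[cA cx]]; last first.
  by exists z0; rewrite z0L /= coversb_Pleq // -atomE.
have Lposet := poset_on_subset P_poset (Pleq_subset x).
move: cov; rewrite (least_uniq Lposet z_least z0L) => cov.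
have /coversE[_ + _ _ _] := cov; rewrite in_Pleq => /andP[_ cx].
by rewrite atomE -(coversb_Pleq _ xP cx) cov cx.
Qed.

Lemma join_exists x u v : x \in P -> u \in P -> v \in P -> le u x -> le v x ->
  exists w, is_join le (L x) u v w.
Proof.
move=> xP uP vP ux vx; case: (geometric_Pleq xP) => /(_ u v) + _.
by rewrite !in_Pleq uP vP ux vx => /(_ isT isT) [].
Qed.

Lemma meet_exists x u v : x \in P -> u \in P -> v \in P -> le u x -> le v x ->
  exists w, is_meet le (L x) u v w.
Proof.
move=> xP uP vP ux vx; case: (geometric_Pleq xP) => /(_ u v) + _.
by rewrite !in_Pleq uP vP ux vx => /(_ isT isT) [].
Qed.

Lemma cover_exists u x : u \in P -> x \in P -> le u x -> u != x ->
  exists2 m, coversb le P u m & le m x.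
Proof.
move=> uP xP ux nux; pose X := [set v in P | [&& le u v, le v x & v != u]].
have sXP : X \subset P by apply/subsetP => y; rewrite inE => /andP[].
have [|m] := exists_minimal P_poset sXP.
  by apply/set0Pn; exists x; rewrite inE xP ux reflP // eq_sym.
rewrite inE => /andP[mP /and3P[um mx nmu]] m_min; exists m => //.
apply: coversI; rewrite 1?eq_sym // => z zP uz zm.
have [|nzu] := eqVneq z u; [by left | right; apply: m_min => //].
by rewrite inE zP uz nzu (transP zP mP xP zm mx).
Qed.

Lemma join_atom_cover x y c : x \in P -> y \in P -> le y x -> c \in A -> le c x -> ~~ le c y ->
  exists v, is_join le (L x) y c v /\ coversb le P y v.
Proof.
move=> xP yP yx cA cx ncy; have [v yc_v] := join_exists xP yP (atom_in cA) yx cx.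
exists v; split => //; have /and4P[vL _ _ _] := yc_v.
move: (vL); rewrite in_Pleq => /andP[vP vx]; rewrite -(coversb_Pleq _ xP vx).
case: (geometric_Pleq xP) => _ /(_ y v) -> //; first by exists c; rewrite atoms_Pleq // cA cx.
by rewrite in_Pleq yP yx.
Qed.

Lemma atomistic x w : x \in P -> w \in P -> le w x ->
  (forall c, c \in A -> le c x -> le c w) -> w = x.
Proof.
move=> xP wP wx below_w; apply/eqP/negPn/negP => nwx.
have [m cov mx] := cover_exists wP xP wx nwx.
have /coversE[_ mP _ _ _] := cov.
have [c []] : exists c, [/\ c \in atoms le (L x), ~~ le c w & is_join le (L x) w c m].
  by case: (geometric_Pleq xP) => _ /(_ w m) <-; rewrite ?in_Pleq ?wP ?mP ?coversb_Pleq.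
by rewrite atoms_Pleq // => /andP[cA cx]; rewrite below_w.
Qed.

Lemma atom_below y : y \in P -> y != z0 -> exists2 c, c \in A & le c y.
Proof.
move=> yP; rewrite eq_sym => nzy; have [m cov my] := cover_exists z0_in yP (z0_le yP) nzy.
by exists m; rewrite ?atomE.
Qed.

Lemma atom_below_neq b y : b \in A -> y \in P -> le b y -> y != b ->
  exists2 c, c \in A :\ b & le c y.
Proof.
move=> bA yP by_; rewrite eq_sym => nby; have bP := atom_in bA.
have [m cov my] := cover_exists bP yP by_ nby; have /coversE[_ mP _ _ _] := cov.
have [c []] : exists c, [/\ c \in atoms le (L y), ~~ le c b & is_join le (L y) b c m].
  by case: (geometric_Pleq yP) => _ /(_ b m) <-; rewrite ?in_Pleq ?bP ?mP ?coversb_Pleq.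
rewrite atoms_Pleq // => /andP[cA cy] ncb _; exists c => //.
by rewrite in_setD1 cA andbT; apply: contraNneq ncb => ->; rewrite reflP.
Qed.

Lemma mub_uniq x (S : {set T}) y1 y2 : x \in P -> S \subset P -> le y1 x -> le y2 x ->
  is_mub le P S y1 -> is_mub le P S y2 -> y1 = y2.
Proof.
move=> xP /subsetP SP y1x y2x /mubE[y1P Sy1 y1_min] /mubE[y2P Sy2 y2_min].
have [m /and4P[mL my1 my2 /forallP m_max]] := meet_exists xP y1P y2P y1x y2x.
move: mL; rewrite in_Pleq => /andP[mP mx].
have Sm s : s \in S -> le s m.
  move=> sS; have sP := SP s sS; move: (m_max s).
  by rewrite in_Pleq sP (transP sP y1P xP (Sy1 s sS) y1x) Sy1 ?Sy2.
by rewrite -(y1_min m mP Sm my1) (y2_min m mP Sm my2).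
Qed.

Lemma is_mub_set0 y : is_mub le P set0 y = (y == z0).
Proof.
apply/idP/eqP => [/mubE[yP _ y_min]|->]; last first.
  apply: mubI z0_in _ _ => [s|w' w'P _ w'z0]; first by rewrite inE.
  exact: antiP w'P z0_in w'z0 (z0_le w'P).
by symmetry; apply: y_min; rewrite ?z0_in ?z0_le // => s; rewrite inE.
Qed.

Lemma sum_is_mub (C : pred T) y (S : {set T}) (c : int) : y \in P -> S \subset P ->
  (forall z, C z -> le z y) -> (forall z, le z y -> is_mub le P S z -> C z) ->
  (\sum_(z | C z) (if is_mub le P S z then c else 0) =
    if S \subset [set s | le s y] then c else 0)%R.
Proof.
move=> yP SP C_le le_C; case: ifP => [/subsetP Sy|nSy].
  have [z zy mub_z] : exists2 z, le z y & is_mub le P S z.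
    by apply: mub_exists P_poset _ _ yP _ => s /Sy; rewrite inE.
  rewrite (bigD1 z) /= ?mub_z ?le_C // big1 ?addr0 // => w /andP[Cw nwz].
  by case: ifP => // mub_w; case/eqP: nwz; apply: mub_uniq yP SP (C_le w Cw) zy mub_w mub_z.
apply: big1 => w Cw; case: ifP => // /mubE[wP Sw _]; case/negP: nSy.
apply/subsetP => s sS; rewrite inE.
exact: transP (subsetP SP _ sS) wP yP (Sw s sS) (C_le w Cw).
Qed.

Lemma rkx_atom c : c \in A -> rkP c = 1%N.
Proof. by rewrite atomE => /ranked_P ->; rewrite (rkx_least P_poset z0_least). Qed.

Lemma le_rkx (Q : {set T}) x y : Q \subset P -> y \in P -> x \in P -> le y x ->
  (rkx le Q y <= rkx le Q x)%N.
Proof.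
move=> /subsetP sQP yP xP yx; apply: rkx_leq_chains => C sCQ chC Cy.
have Cx u : u \in C -> le u x.
  by move=> uC; apply: transP (sQP _ (subsetP sCQ _ uC)) yP xP (Cy u uC) yx.
by have := leq_chain_rkx sCQ chC Cx; lia.
Qed.

Lemma chain_between u x : u \in P -> x \in P -> le u x ->
  exists C : {set T}, [/\ C \subset [set v in P | le u v], chainb le C,
    forall w, w \in C -> le w x & #|C| = (rkP x - rkP u).+1].
Proof.
move=> uP xP ux; pose up_to u := #|[set v in P | le u v && le v x]|.
have [n] := ubnP (up_to u); elim: n u uP ux => // n IHn u uP ux card_lt.
have [<-|nux] := eqVneq u x.
  exists [set u]; rewrite sub1set inE uP reflP // chain1 reflP // cards1 subnn.
  by split => // w; rewrite in_set1 => /eqP ->; rewrite reflP.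
have [m cov mx] := cover_exists uP xP ux nux; have /coversE[_ mP um num _] := cov.
have mu_false : ~~ le m u by apply: contra num => mu; rewrite (antiP uP mP um mu).
have [|C [sC chC Cx cardC]] := IHn m mP mx.
  suff : (up_to m < up_to u)%N by lia.
  apply/proper_card/properP; split.
    apply/subsetP => v; rewrite !inE => /and3P[vP mv vx].
    by rewrite vP vx (transP uP mP vP um mv).
  by exists u; rewrite !inE uP ?reflP ?ux ?(negbTE mu_false).
have CP : C \subset P by apply: subset_trans sC _; apply/subsetP => v; rewrite inE => /andP[].
have uC : u \notin C by apply: contra mu_false => /(subsetP sC); rewrite inE => /andP[].
exists (u |: C); split.
- rewrite subUset sub1set inE uP reflP //=; apply/subsetP => v /(subsetP sC).
  by rewrite !inE => /andP[vP mv]; rewrite vP (transP uP mP vP um mv).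
- apply: (chainU1 P_poset) => // w wC; left; move/(subsetP sC): wC; rewrite inE => /andP[wP mw].
  exact: transP uP mP wP um mw.
- by move=> w; rewrite in_setU1 => /orP[/eqP ->|/Cx].
- have := le_rkx (subxx P) mP xP mx; rewrite (ranked_P cov) => rk_lt.
  by rewrite cardsU1 uC cardC (ranked_P cov) subnSK.
Qed.

Section Deletion.
Variable a : T.
Hypothesis aA : a \in A.

Local Notation A' := (A :\ a).
Local Notation P' := (Pprime le P a).
Local Notation P'' := (Pdprime le P a).

Let a_in : a \in P := atom_in aA.

Lemma atomsD1_subset : A' \subset P.
Proof. by apply/subsetP => s /setD1P[_ /atom_in]. Qed.

Lemma in_Pprime y :
  (y \in P') = (y \in P) && [exists S : {set T}, (S \subset A') && is_mub le P S y].
Proof.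
rewrite inE; case yP: (y \in P) => //=; apply/orP/existsP.
  case=> [y_least|/existsP[S /and3P[sS _ mub_y]]]; last by exists S; rewrite sS.
  by exists set0; rewrite sub0set is_mub_set0 (least_uniq P_poset y_least z0_least) eqxx.
case=> S /andP[sS mub_y]; have [S0|nS0] := eqVneq S set0.
  by left; move: mub_y; rewrite S0 is_mub_set0 => /eqP ->.
by right; apply/existsP; exists S; rewrite sS nS0.
Qed.

Lemma Pprime_subset : P' \subset P.
Proof. by apply/subsetP => y; rewrite in_Pprime => /andP[]. Qed.

Lemma Pdprime_subset : P'' \subset P.
Proof. by apply/subsetP => y; rewrite inE => /andP[]. Qed.

Lemma mub_in_Pprime (S : {set T}) y : S \subset A' -> is_mub le P S y -> y \in P'.
Proof.
move=> sS mub_y; have /mubE[yP _ _] := mub_y.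
by rewrite in_Pprime yP; apply/existsP; exists S; rewrite sS.
Qed.

Lemma z0_least_Pprime : leastb le P' z0.
Proof.
apply: leastb_subset Pprime_subset _.
by apply: (@mub_in_Pprime set0); rewrite ?sub0set ?is_mub_set0.
Qed.

Lemma a_least_Pdprime : leastb le P'' a.
Proof.
rewrite /leastb inE a_in reflP ?a_in //=.
by apply/forallP => x; apply/implyP; rewrite inE => /andP[].
Qed.

(* If [y] is a minimal upper bound of [S], the join [v] of [y] and [b] is one of [b |: S]:
   a smaller bound [w'] meets [y] in an upper bound of [S] below [y], which must be [y]. *)
Lemma Pprime_join_atom x y b : x \in P -> y \in P' -> le y x -> b \in A' -> le b x -> ~~ le b y ->
  exists v, [/\ v \in P', coversb le P y v, le v x & le b v].
Proof.
move=> xP; rewrite in_Pprime => /andP[yP /existsP[S /andP[sS mub_y]]] yx bA' bx nby.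
have /setD1P[_ bA] := bA'; have bP := atom_in bA.
have [v [/and4P[vL yv bv /forallP v_min] cov]] := join_atom_cover xP yP yx bA bx nby.
move: vL; rewrite in_Pleq => /andP[vP vx]; exists v; split => //.
have [_ Sy y_min] := mubE mub_y; have SP := subset_trans sS atomsD1_subset.
apply: (@mub_in_Pprime (b |: S)); first by rewrite subUset sub1set bA' sS.
apply: mubI => // [s|w' w'P bSw' w'v].
  by case/setU1P=> [->//|sS']; apply: transP (subsetP SP _ sS') yP vP (Sy s sS') yv.
have w'x := transP w'P vP xP w'v vx.
have [m /and4P[mL mw' my /forallP m_max]] := meet_exists xP w'P yP w'x yx.
move: mL; rewrite in_Pleq => /andP[mP mx].
have Sm s : s \in S -> le s m.
  move=> sS'; have sP := subsetP SP s sS'; move: (m_max s).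
  by rewrite in_Pleq sP (transP sP yP xP (Sy s sS') yx) bSw' ?in_setU1 ?sS' ?orbT ?Sy.
have yw' : le y w' by rewrite -(y_min m mP Sm my).
apply: antiP => //; move: (v_min w').
by rewrite in_Pleq w'P w'x yw' bSw' ?setU11.
Qed.

(* A maximal-rank element [w] of [P'] strictly below [y] is covered by [y]: otherwise
   joining [w] with an atom of [S] not below [w] climbs higher inside [P']. *)
Lemma Pprime_cover y : y \in P' -> y != z0 -> exists2 w, w \in P' & coversb le P w y.
Proof.
move=> yP' nyz0; move: (yP'); rewrite in_Pprime => /andP[yP /existsP[S /andP[sS mub_y]]].
pose X := [set w in P' | le w y && (w != y)].
have z0X : z0 \in X.
  by apply/setIdP; rewrite z0_le // eq_sym nyz0; split => //; case/andP: z0_least_Pprime.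
have [w wX w_max] := arg_maxnP (fun w => rkP w) z0X; have {wX} : w \in X := wX.
case/setIdP => wP' /andP[wy nwy]; have wP := subsetP Pprime_subset _ wP'.
have [_ Sy y_min] := mubE mub_y.
have [/forallP S_le_w|/forallPn[s]] := boolP [forall s in S, le s w].
  by case/eqP: nwy; apply: y_min => // s; apply/implyP/S_le_w.
rewrite negb_imply => /andP[sS' nsw].
have [v [vP' cov vy sv]] := Pprime_join_atom yP wP' wy (subsetP sS _ sS') (Sy _ sS') nsw.
exists w => //; have [<-//|nvy] := eqVneq v y.
have vX : v \in X by apply/setIdP; rewrite vy nvy.
by have := w_max v vX; rewrite /= (ranked_P cov) ltnn.
Qed.

Lemma Pprime_chain y : y \in P' -> exists C : {set T},
  [/\ C \subset P', chainb le C, forall w, w \in C -> le w y & #|C| = (rkP y).+1].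
Proof.
have [n] := ubnP (rkP y); elim: n y => // n IHn y rk_lt yP'.
have yP := subsetP Pprime_subset _ yP'.
have [->|nyz0] := eqVneq y z0.
  exists [set z0]; rewrite sub1set chain1 cards1 (rkx_least P_poset z0_least) reflP ?z0_in //.
  split => //; [by case/andP: z0_least_Pprime | by move=> w /set1P ->; rewrite reflP ?z0_in].
have [w wP' cov] := Pprime_cover yP' nyz0; have /coversE[wP _ wy nwy _] := cov.
have [|C [sC chC Cw cardC]] := IHn w _ wP'; first by move: rk_lt; rewrite (ranked_P cov).
have CP := subset_trans sC Pprime_subset.
have Cy u : u \in C -> le u y by move=> uC; apply: transP (subsetP CP _ uC) wP yP (Cw u uC) wy.
have yC : y \notin C by apply/negP => /Cw yw; case/eqP: nwy; apply: antiP.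
exists (y |: C); split.
- by rewrite subUset sub1set yP' sC.
- by apply: (chainU1 P_poset) => // u uC; right; apply: Cy.
- by move=> u /setU1P[->|/Cy//]; rewrite reflP.
- by rewrite cardsU1 yC cardC (ranked_P cov).
Qed.

Lemma rkx_Pprime y : y \in P' -> rkx le P' y = rkP y.
Proof.
move=> yP'; apply/eqP; rewrite eqn_leq rkx_subset ?Pprime_subset //=.
have [C [sC chC Cy cardC]] := Pprime_chain yP'.
by have := leq_chain_rkx sC chC Cy; rewrite cardC.
Qed.

Lemma rkx_Pdprime x : x \in P'' -> rkx le P'' x = (rkP x).-1.
Proof.
rewrite inE => /andP[xP ax]; have := le_rkx (subxx P) a_in xP ax; rewrite (rkx_atom aA) => rk_gt0.
apply/eqP; rewrite eqn_leq; apply/andP; split.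
  apply: rkx_leq_chains => C sC chC Cx; have CP := subset_trans sC Pdprime_subset.
  have z0C : z0 \notin C.
    apply/negP => /(subsetP sC); rewrite inE => /andP[_ az0].
    by case/eqP: (atom_neq_z0 aA); apply: antiP a_in z0_in az0 (z0_le a_in).
  (* Prepending [z0] to a chain of [P''] gives a chain of [P]. *)
  have : (#|z0 |: C|.-1 <= rkP x)%N.
    apply: leq_chain_rkx; first by rewrite subUset sub1set z0_in.
      by apply: (chainU1 P_poset); rewrite ?z0_in // => w /(subsetP CP) /z0_le; left.
    by move=> u /setU1P[->|/Cx//]; apply: z0_le.
  by rewrite cardsU1 z0C prednK.
have [C [sC chC Cx cardC]] := chain_between a_in xP ax.
by have := leq_chain_rkx sC chC Cx; rewrite cardC (rkx_atom aA) subn1.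
Qed.

Lemma rk_Pprime_le : (rk le P' <= rk le P)%N.
Proof.
apply: rk_leq => x xP'; rewrite rkx_Pprime //.
exact/leq_rkx_rk/(subsetP Pprime_subset).
Qed.

Lemma rk_Pdprime_le : (rk le P'' <= (rk le P).-1)%N.
Proof.
apply: rk_leq => x xP''; rewrite rkx_Pdprime // -!subn1 leq_sub2r //.
exact/leq_rkx_rk/(subsetP Pdprime_subset).
Qed.

Lemma Pprime_below_max x : x \in P ->
  exists w, [/\ w \in P', le w x & forall b, b \in A' -> le b x -> le b w].
Proof.
move=> xP; pose Y := [set w in P' | le w x].
have z0Y : z0 \in Y by apply/setIdP; rewrite z0_le //; case/andP: z0_least_Pprime.
have [w wY w_max] := arg_maxnP (fun w => rkP w) z0Y; have {wY} : w \in Y := wY.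
case/setIdP => wP' wx; exists w; split => // b bA' bx; apply/negPn/negP => nbw.
have [v [vP' cov vx _]] := Pprime_join_atom xP wP' wx bA' bx nbw.
have vY : v \in Y by apply/setIdP.
by have := w_max v vY; rewrite /= (ranked_P cov) ltnn.
Qed.

(* [x] is the element [w] of [P'] above all atoms [<> a] below [x], or its join with [a]. *)
Lemma rk_le_Pprime_succ : (rk le P <= (rk le P').+1)%N.
Proof.
apply: rk_leq => x xP; have [w [wP' wx below_w]] := Pprime_below_max xP.
have wP := subsetP Pprime_subset _ wP'.
have rk_w : (rkP w <= rk le P')%N by rewrite -rkx_Pprime // leq_rkx_rk.
have [/andP[ax naw]|] := boolP (le a x && ~~ le a w).
  have [v [/and4P[vL wv av _] cov]] := join_atom_cover xP wP wx aA ax naw.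
  move: vL; rewrite in_Pleq => /andP[vP vx].
  suff <- : v = x by rewrite (ranked_P cov).
  apply: atomistic => // c cA cx; have [->//|nca] := eqVneq c a.
  by apply: transP (atom_in cA) wP vP (below_w c _ cx) wv; rewrite in_setD1 nca.
rewrite negb_and negbK => a_cases.
suff -> : x = w by apply: leq_trans rk_w _.
symmetry; apply: atomistic => // c cA cx; have [eca|nca] := eqVneq c a.
  by move: a_cases; rewrite -eca cx.
by apply: below_w; rewrite // in_setD1 nca.
Qed.

Local Notation below y := [set s | le s y].

(* [cross_sum set0] and [cross_sum [set a]] are the two halves of the crosscut expansion
   [mu P z0 y = \sum_(S \subset A | y minimal upper bound of S) (-1)^|S|],
   split by whether [a] belongs to [S]. *)
Definition cross_sum (B : {set T}) (y : T) : int :=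
  (\sum_(S : {set T} | S \subset A') (if is_mub le P (B :|: S) y then (-1) ^+ #|S| else 0))%R.

Lemma sum_cross_sum (C : pred T) (B : {set T}) w : w \in P -> B \subset P ->
  (forall z, C z -> le z w) ->
  (forall (S : {set T}) z, S \subset A' -> le z w -> is_mub le P (B :|: S) z -> C z) ->
  (\sum_(z | C z) cross_sum B z =
    if B \subset below w then (A' :&: below w == set0)%:R else 0)%R.
Proof.
move=> wP BP C_le le_C; rewrite /cross_sum exchange_big /=.
rewrite (eq_bigr (fun S => if B :|: S \subset below w then (-1) ^+ #|S| else 0)%R);
  last first.
  move=> S sS; apply: sum_is_mub => //; last by move=> z; apply: le_C sS.
  by rewrite subUset BP (subset_trans sS atomsD1_subset).
case: ifP => [Bw|nBw]; last by apply: big1 => S _; rewrite subUset nBw.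
by rewrite -sum_sign_subsets_in; apply: eq_bigr => S _; rewrite subUset Bw.
Qed.

Lemma atomsD1_below_eq0 x y : A' :&: below x = set0 ->
  (y != x -> exists2 c, c \in A' & le c y) -> (A' :&: below y == set0) = (y == x).
Proof.
move=> A'x0 A'y; have [->|nyx] := eqVneq y x; first by rewrite A'x0 eqxx.
by apply/negbTE/set0Pn; have [c cA' cy] := A'y nyx; exists c; rewrite inE cA' inE.
Qed.

Lemma atomsD1_below_z0 : A' :&: below z0 = set0.
Proof.
apply/setP => c; rewrite in_setI in_setD1 in_set0; apply/negP => /andP[/andP[_ cA]].
rewrite inE => cz0; case/eqP: (atom_neq_z0 cA).
exact: antiP (atom_in cA) z0_in cz0 (z0_le (atom_in cA)).
Qed.

Lemma atomsD1_below_a : A' :&: below a = set0.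
Proof.
apply/setP => c; rewrite in_setI in_setD1 in_set0; apply/negP => /andP[/andP[nca cA]].
rewrite inE => ca; have [cz0|/eqP] := le_atom aA (atom_in cA) ca; last by rewrite (negbTE nca).
by move: (atom_neq_z0 cA); rewrite cz0 eqxx.
Qed.

Lemma cross_sum0_out y : y \notin P' -> cross_sum set0 y = 0%R.
Proof.
move=> nyP'; apply: big1 => S sS; case: ifP => // mub_y; case/negP: nyP'.
by apply: mub_in_Pprime sS _; rewrite set0U in mub_y.
Qed.

Lemma cross_sum1_out y : ~~ le a y -> cross_sum [set a] y = 0%R.
Proof.
move=> nay; apply: big1 => S _; case: ifP => // /mubE[_ Sy _]; case/negP: nay.
by apply: Sy; rewrite setU11.
Qed.

Lemma cross_sum0E y : y \in P' -> cross_sum set0 y = mu le P' z0 y.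
Proof.
have P'poset := poset_on_subset P_poset Pprime_subset.
have /andP[z0P' _] := z0_least_Pprime.
move=> yP'; apply: (mu_unique P'poset z0P') => //; last exact/z0_le/(subsetP Pprime_subset).
move=> w wP' _; have wP := subsetP Pprime_subset _ wP'.
rewrite (sum_cross_sum (w := w)) ?sub0set // => [|z /and3P[]//|S z sS zw]; last first.
  rewrite set0U => mub_z; have /mubE[zP _ _] := mub_z.
  by rewrite (mub_in_Pprime sS mub_z) zw z0_le.
rewrite /= (atomsD1_below_eq0 atomsD1_below_z0) // => nwz0.
move: wP'; rewrite in_Pprime => /andP[_ /existsP[S /andP[sS mub_w]]].
have [S0|/set0Pn[s sS']] := eqVneq S set0; first by move: mub_w nwz0; rewrite S0 is_mub_set0 => ->.
by have [_ Sw _] := mubE mub_w; exists s; [apply: subsetP sS s sS' | apply: Sw].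
Qed.

Lemma cross_sum1E y : y \in P'' -> cross_sum [set a] y = mu le P'' a y.
Proof.
have P''poset := poset_on_subset P_poset Pdprime_subset.
have /andP[aP'' _] := a_least_Pdprime.
move=> yP''; apply: (mu_unique P''poset aP'') => //; last by move: yP''; rewrite inE => /andP[].
move=> w; rewrite inE => /andP[wP _] aw.
have aP : [set a] \subset P by rewrite sub1set a_in.
pose C z := (z \in P'') && (le a z && le z w).
have le_C (S : {set T}) z : S \subset A' -> le z w -> is_mub le P ([set a] :|: S) z -> C z.
  by move=> _ zw /mubE[zP Sz _]; rewrite /C inE zP zw Sz ?setU11.
rewrite (@sum_cross_sum C _ _ wP aP) => [|z /and3P[]//|//].
rewrite sub1set inE aw (atomsD1_below_eq0 atomsD1_below_a) // => nwa.
exact: atom_below_neq aA wP aw nwa.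
Qed.

Lemma mu_cross_sum y : y \in P -> mu le P z0 y = (cross_sum set0 y - cross_sum [set a] y)%R.
Proof.
move=> yP; symmetry; pose f y := (cross_sum set0 y - cross_sum [set a] y)%R.
apply: (mu_unique P_poset z0_in (f := f)) (z0_le yP) => // w wP _.
pose C z := (z \in P) && (le z0 z && le z w).
have le_C (B S : {set T}) z : S \subset A' -> le z w -> is_mub le P (B :|: S) z -> C z.
  by move=> _ zw /mubE[zP _ _]; rewrite /C zP z0_le.
have aP : [set a] \subset P by rewrite sub1set a_in.
rewrite sumrB (@sum_cross_sum C _ _ wP (sub0set P)) => [|z /and3P[]//|]; last exact: le_C.
rewrite (@sum_cross_sum C _ _ wP aP) => [|z /and3P[]//|]; last exact: le_C.
rewrite sub0set sub1set inE; have [aw|naw] := boolP (le a w).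
  suff /negbTE -> : w != z0 by rewrite subrr.
  move: (atom_neq_z0 aA); apply: contra_neq => wz0.
  by apply: antiP a_in z0_in _ (z0_le a_in); rewrite -wz0.
rewrite subr0 (atomsD1_below_eq0 atomsD1_below_z0) // => nwz0.
have [c cA cw] := atom_below wP nwz0; exists c => //.
by rewrite in_setD1 cA andbT; apply: contraNneq naw => <-.
Qed.

Lemma sum_cross_sum0_chi :
  (\sum_(x in P) (cross_sum set0 x)%:P * 'X^(rk le P - rkP x) =
    'X^(rk le P - rk le P') * chi le P')%R.
Proof.
rewrite (chiE (poset_on_subset P_poset Pprime_subset) z0_least_Pprime) mulr_sumr.
rewrite (bigID (fun x => x \in P')) /= [X in (_ + X)%R]big1 ?addr0;
  last by move=> x /andP[_ /cross_sum0_out ->]; rewrite mul0r.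
rewrite (eq_bigl (fun x => x \in P')) => [|x]; last first.
  by apply/andP/idP => [[]//|xP']; rewrite (subsetP Pprime_subset).
apply: eq_bigr => x xP'; rewrite cross_sum0E // rkx_Pprime // mulrCA -exprD.
have := leq_rkx_rk le xP'; have := rk_Pprime_le; rewrite rkx_Pprime // => rk_le rkx_le.
by congr (_ * 'X^_)%R; lia.
Qed.

Lemma sum_cross_sum1_chi :
  (\sum_(x in P) (cross_sum [set a] x)%:P * 'X^(rk le P - rkP x) =
    'X^((rk le P).-1 - rk le P'') * chi le P'')%R.
Proof.
rewrite (chiE (poset_on_subset P_poset Pdprime_subset) a_least_Pdprime) mulr_sumr.
rewrite (bigID (le a)) /= [X in (_ + X)%R]big1 ?addr0;
  last by move=> x /andP[_ /cross_sum1_out ->]; rewrite mul0r.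
rewrite (eq_bigl (fun x => x \in P'')) => [|x]; last by rewrite inE.
apply: eq_bigr => x xP''; rewrite cross_sum1E // rkx_Pdprime // mulrCA -exprD.
have := leq_rkx_rk le xP''; rewrite rkx_Pdprime // => rkx_le.
move: xP''; rewrite inE => /andP[xP ax]; have := le_rkx (subxx P) a_in xP ax.
rewrite (rkx_atom aA) => rk_gt0; have := leq_rkx_rk le xP; have := rk_Pdprime_le => ? ?.
by congr (_ * 'X^_)%R; lia.
Qed.

Lemma chi_deletion_restriction :
  chi le P = ('X^(rk le P - rk le P') * chi le P' -
              'X^((rk le P).-1 - rk le P'') * chi le P'')%R.
Proof.
rewrite (chiE P_poset z0_least) -sum_cross_sum0_chi -sum_cross_sum1_chi -sumrB.
by apply: eq_bigr => x xP; rewrite mu_cross_sum // polyCB mulrBl.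
Qed.

Lemma rk_Pprime_exps ds : exps le P' ds -> rk le P' = size ds.
Proof. exact/rk_exps/z0_least_Pprime/(poset_on_subset P_poset Pprime_subset). Qed.

Lemma rk_Pdprime_exps ds : exps le P'' ds -> rk le P'' = size ds.
Proof. exact/rk_exps/a_least_Pdprime/(poset_on_subset P_poset Pdprime_subset). Qed.

Lemma exps_nonseparator d ds : ~ separator le P a ->
  exps le P'' ds -> exps le P' (d :: ds) -> exps le P (d.+1 :: ds).
Proof.
move=> nsep exps'' exps'; have rk'' := rk_Pdprime_exps exps''.
have rk' := rk_Pprime_exps exps'; have rk_ge := rk_Pprime_le.
have rkP : rk le P = (size ds).+1.
  by have := rk_le_Pprime_succ; move: nsep rk_ge; rewrite /separator rk' /=; lia.
case: exps'' exps' => _ chi'' [/andP[_ pos] chi']; split; first by apply/andP; split.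
rewrite chi_deletion_restriction rkP rk' rk'' /= !subnn chi' chi'' !big_cons !expr0 !mul1r.
by rewrite mulrSr polyCD polyC1; ring.
Qed.

Lemma exps_separator ds : separator le P a ->
  exps le P'' ds -> exps le P' ds -> exps le P (1%N :: ds).
Proof.
move=> sep exps'' exps'; have rk'' := rk_Pdprime_exps exps''.
have rk' := rk_Pprime_exps exps'.
have rkP : rk le P = (size ds).+1 by move: sep; rewrite /separator rk'; lia.
case: exps'' exps' => _ chi'' [pos chi']; split; first by apply/andP; split.
rewrite chi_deletion_restriction rkP rk' rk'' subSnn /= subnn chi' chi'' big_cons.
by rewrite expr0 expr1 mul1r polyC1; ring.
Qed.

End Deletion.
End LocallyGeometric.

Theorem theorem3p13 (T : finType) (le : rel T) (P : {set T}) (a : T) :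
  locally_geometric le P -> atoms le P != set0 -> a \in atoms le P ->
  (~ separator le P a ->
     forall (ds : seq nat) (d : nat),
       inductive le (Pdprime le P a) -> exps le (Pdprime le P a) ds ->
       inductive le (Pprime le P a) -> exps le (Pprime le P a) (d :: ds) ->
       inductive le P /\ exps le P (d.+1 :: ds)) /\
  (separator le P a ->
     forall (ds : seq nat),
       inductive le (Pdprime le P a) -> exps le (Pdprime le P a) ds ->
       inductive le (Pprime le P a) -> exps le (Pprime le P a) ds ->
       inductive le P /\ exps le P (1%N :: ds)).
Proof.
move=> LG _ aA; have [[Pposet unique_min _] _] := LG.
have [z0 z0_least] := least_exists Pposet unique_min.
split=> [nsep ds d ind'' exps'' ind' exps'|sep ds ind'' exps'' ind' exps'].
- split; last exact: (exps_nonseparator LG z0_least aA).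
  apply: inductive_step LG aA ind' ind'' _; exists ('X - (d%:R)%:P)%R.
  by case: exps' => _ ->; case: exps'' => _ ->; rewrite big_cons.
- split; last exact: (exps_separator LG z0_least aA).
  apply: inductive_step LG aA ind' ind'' _; exists 1%R.
  by case: exps' => _ ->; case: exps'' => _ ->; rewrite mul1r.
Qed.
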